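(* For linearly topologized $k$-vector spaces $E,F$, let $\Phi_{E,F}\colon E^\circ\otimes F^\circ\to (E\otimes^! F)^\circ$ be the linear map sending $\phi\otimes\psi$ to the functional $e\otimes f\mapsto \phi(e)\psi(f)$ (this functional is continuous on $E\otimes^! F$). Together with the identification $k^\circ\cong k$, the maps $\Phi_{E,F}$ make the continuous dual functor \[(-)^\circ=\mathrm{Top}_k(-,k)\colon (\mathrm{Top}_k,\otimes^!,k)^{\mathrm{op}}\to(\mathrm{Vect}_k,\otimes,k)\] a lax monoidal functor. Moreover, its restriction to the full subcategory $\mathrm{CF}_k$ of cofinite spaces is a strong monoidal functor $(\mathrm{CF}_k,\otimes^!,k)^{\mathrm{op}}\to(\mathrm{Vect}_k,\otimes,k)$; in particular, $\Phi_{E,F}$ is an isomorphism $E^\circ\otimes F^\circ\cong (E\otimes^! F)^\circ$ whenever $E$ and $F$ are cofinite.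
   Context: $k$ is an arbitrary field with the discrete topology. A linearly topologized $k$-vector space is a topological $k$-vector space having a neighborhood basis of $0$ consisting of open linear subspaces. $\mathrm{Top}_k$ denotes the category of linearly topologized $k$-vector spaces with continuous linear maps, and $\mathrm{Vect}_k$ the category of $k$-vector spaces (identified with the discrete objects of $\mathrm{Top}_k$). A linearly topologized space is cofinite if all its open subspaces have finite codimension; $\mathrm{CF}_k$ is the full subcategory of cofinite spaces. For $E,F\in\mathrm{Top}_k$, $E\otimes^! F$ denotes the vector space $E\otimes_k F$ with the linear topology whose open subspaces are the subspaces $W$ for which there are open subspaces $E_0\subseteq E$, $F_0\subseteq F$ with $E_0\otimes F+E\otimes F_0\subseteq W$; this makes $\mathrm{Top}_k$ and $\mathrm{CF}_k$ monoidal categories with unit $k$. The continuous dual is $E^\circ=\mathrm{Top}_k(E,k)$, the space of linear functionals on $E$ with open kernel. *)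

From HB Require Import structures.
From mathcomp Require Import all_boot all_algebra.
From mathcomp Require Import boolp classical_sets functions.
Unset Implicit Arguments.
Import GRing.Theory.
Local Open Scope ring_scope.

Definition islin {k : fieldType} {U V : lmodType k} (f : U -> V) : Prop :=
  forall (a : k) (x y : U), f (a *: x + y) = a *: f x + f y.

Definition subspace {k : fieldType} {U : lmodType k} (W : U -> Prop) : Prop :=
  W 0 /\ forall (a : k) (x y : U), W x -> W y -> W (a *: x + y).

Definition bilin {k : fieldType} {U V W : lmodType k} (b : U -> V -> W) : Prop :=
  (forall u, islin (b u)) /\ (forall v, islin (fun u => b u v)).

Definition is_tensor {k : fieldType} {U V T : lmodType k} (t : U -> V -> T) : Prop :=
  bilin t /\
  forall (W : lmodType k) (b : U -> V -> W), bilin b ->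
    exists f : T -> W, islin f /\ (forall u v, f (t u v) = b u v) /\
      forall g : T -> W, islin g -> (forall u v, g (t u v) = b u v) -> g = f.

(** A linear topology on a k-vector space is determined by (and determines)
    its set of open linear subspaces: a nonempty, upward closed (among
    subspaces) family of subspaces closed under finite intersections.  The
    open sets are then the unions of cosets of open subspaces.  We record a
    linearly topologized space by its family of open subspaces. *)
Record ltvs (k : fieldType) := LTVS {
  lt_car :> lmodType k;
  lt_open : (lt_car -> Prop) -> Prop;
  lt_open_subspace : forall W, lt_open W -> subspace W;
  lt_open_full : lt_open (fun _ => True);
  lt_open_up : forall W W', lt_open W -> subspace W' ->
     (forall x, W x -> W' x) -> lt_open W';
  lt_open_cap : forall W W', lt_open W -> lt_open W' ->
     lt_open (fun x => W x /\ W' x) }.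
Arguments lt_open {k}.

(** continuous maps: preimages of open subspaces are open subspaces
    (for linear maps this is continuity) *)
Definition cont {k : fieldType} {E F : ltvs k} (f : E -> F) : Prop :=
  forall W, lt_open F W -> lt_open E (fun x => W (f x)).

Definition is_morph {k : fieldType} {E F : ltvs k} (f : E -> F) : Prop :=
  islin f /\ cont f.

(** cofinite: every open subspace has finite codimension *)
Definition cofinite {k : fieldType} (E : ltvs k) : Prop :=
  forall W, lt_open E W ->
    exists s : seq E, forall x : E,
      exists c : 'I_(size s) -> k, W (x - \sum_(i < size s) c i *: s`_i).

Lemma subspace_ker {k : fieldType} {U V : lmodType k} (f : U -> V) :
  islin f -> subspace (fun x => f x = 0).
Proof.
move=> lf; have f0 : f 0 = 0.
  have h := lf 1 0 0; rewrite !scale1r addr0 in h.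
  by have := congr1 (fun z => z - f 0) h; rewrite /= subrr addrK => ->.
split=> // a x y fx fy; by rewrite lf fx fy scaler0 addr0.
Qed.

Section KDisc.
Variable k : fieldType.
Lemma kd_sub (W : k^o -> Prop) : subspace W -> subspace W. Proof. by []. Qed.
Lemma kd_full : subspace (fun _ : k^o => True). Proof. by []. Qed.
Lemma kd_up (W W' : k^o -> Prop) : subspace W -> subspace W' ->
  (forall x, W x -> W' x) -> subspace W'. Proof. by []. Qed.
Lemma kd_cap (W W' : k^o -> Prop) : subspace W -> subspace W' ->
  subspace (fun x => W x /\ W' x).
Proof.
move=> [W0 WD] [W'0 W'D]; split=> // a x y [? ?] [? ?]; split; [exact: WD|exact: W'D].
Qed.
Definition kdisc : ltvs k := LTVS k k^o subspace kd_sub kd_full kd_up kd_cap.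
End KDisc.
Arguments kdisc k : clear implicits.

(** * The topology of [E (x)^! F] on a tensor product [(T, t)] of the
    underlying spaces: W is open iff W is a subspace and there are open
    E0, F0 with E0 (x) F + E (x) F0 contained in W (i.e. W contains all
    t e0 f and t e f0). *)
Section Bang.
Variables (k : fieldType) (E F : ltvs k) (T : lmodType k) (t : E -> F -> T).
Definition bang_open (W : T -> Prop) : Prop :=
  subspace W /\ exists (E0 : E -> Prop) (F0 : F -> Prop),
    [/\ lt_open E E0, lt_open F F0,
        (forall e f, E0 e -> W (t e f)) & (forall e f, F0 f -> W (t e f))].
Lemma bang_sub W : bang_open W -> subspace W. Proof. by case. Qed.
Lemma bang_full : bang_open (fun _ => True).
Proof.
split=> //; exists (fun _ => True), (fun _ => True); split=> //; exact: lt_open_full.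
Qed.
Lemma bang_up W W' : bang_open W -> subspace W' ->
  (forall x, W x -> W' x) -> bang_open W'.
Proof.
move=> [_ [E0 [F0 [oE oF h1 h2]]]] sW' sub; split=> //.
by exists E0, F0; split=> // e f ?; apply: sub; [exact: h1|exact: h2].
Qed.
Lemma bang_cap W W' : bang_open W -> bang_open W' ->
  bang_open (fun x => W x /\ W' x).
Proof.
move=> [[W0 WD] [E0 [F0 [oE oF h1 h2]]]] [[W'0 W'D] [E1 [F1 [oE1 oF1 h1' h2']]]].
split; first by split=> // a x y [? ?] [? ?]; split; [exact: WD|exact: W'D].
exists (fun x => E0 x /\ E1 x), (fun x => F0 x /\ F1 x); split.
- exact: lt_open_cap.
- exact: lt_open_cap.
- by move=> e f [? ?]; split; [exact: h1|exact: h1'].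
- by move=> e f [? ?]; split; [exact: h2|exact: h2'].
Qed.
Definition bang : ltvs k := LTVS k T bang_open bang_sub bang_full bang_up bang_cap.
End Bang.
Arguments bang {k} E F {T} t.

(** * The continuous dual E° = Top_k(E, k): linear functionals with open
    kernel, as a k-vector space (subspace of the functions E -> k). *)
Definition is_cfun {k : fieldType} (E : ltvs k) (f : E -> k^o) : Prop :=
  islin f /\ lt_open E (fun x => f x = 0).
Definition cfun_pred {k : fieldType} (E : ltvs k) : {pred (E -> k^o)} :=
  fun f => `[< is_cfun E f >].
Record cdual {k : fieldType} (E : ltvs k) :=
  CDual { cdfun :> E -> k^o; _ : cdfun \in cfun_pred E }.
Arguments cdfun {k E}.

Section DualInst.
Variables (k : fieldType) (E : ltvs k).
HB.instance Definition _ := [isSub for @cdfun k E].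
HB.instance Definition _ := [Choice of cdual E by <:].
Lemma cfun_submod : submod_closed (cfun_pred E).
Proof.
split.
  apply/asboolP; split; first by move=> a x y; rewrite /= scaler0 addr0.
  apply: (lt_open_up _ E _ _ (lt_open_full _ E)); last by [].
  by split=> // a x y _ _ /=.
move=> a u v /asboolP [lu ou] /asboolP [lv ov]; apply/asboolP.
have ev z : (a *: u + v) z = a *: u z + v z by [].
split.
  move=> b x y; rewrite !ev lu lv.
  rewrite !scalerDr !scalerA [a * b]mulrC !addrA; congr (_ + _).
  by rewrite -!addrA; congr (_ + _); rewrite addrC.
apply: (lt_open_up _ E _ _ (lt_open_cap _ E _ _ ou ov)).
  apply: (@subspace_ker k E k^o (fun x => a *: u x + v x)).
  move=> b x y; rewrite lu lv !scalerDr !scalerA [a * b]mulrC !addrA.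
  by congr (_ + _); rewrite -!addrA; congr (_ + _); rewrite addrC.
by move=> x [ux vx]; rewrite ev ux vx scaler0 addr0.
Qed.
HB.instance Definition _ :=
  GRing.isSubmodClosed.Build k (E -> k^o) (cfun_pred E) cfun_submod.
HB.instance Definition _ := [SubChoice_isSubLmodule of cdual E by <:].
End DualInst.

(** The action of the dual functor on a morphism [a : E' -> E] of Top_k:
    [a° : E° -> E'°], phi |-> phi o a.  (For a continuous linear [a] the
    composite is continuous linear; otherwise we return 0 — only used for
    morphisms.) *)
Definition dmap {k : fieldType} {E' E : ltvs k} (a : E' -> E) (phi : cdual E)
  : cdual E' := insubd (0 : cdual E') (fun x => cdfun phi (a x)).

(** The identification k ≅ k°, c |-> (x |-> c x) *)
Definition eps {k : fieldType} (c : k^o) : cdual (kdisc k) :=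
  insubd (0 : cdual (kdisc k)) (fun x : k^o => c * x).

(** * Specifications of the structure maps (each determined uniquely, by the
    universal property of the tensor products involved). *)

Definition mu_spec {k : fieldType} (E F : ltvs k)
  {D : lmodType k} (d : cdual E -> cdual F -> D)
  {T : lmodType k} (t : E -> F -> T) (Phi : D -> cdual (bang E F t)) : Prop :=
  islin Phi /\
  forall phi psi (e : E) (f : F), cdfun (Phi (d phi psi)) (t e f) = phi e * psi f.

Definition tmap_spec {k : fieldType} {U V U' V' T T' : lmodType k}
  (t : U -> V -> T) (t' : U' -> V' -> T') (f : U -> U') (g : V -> V')
  (h : T -> T') : Prop :=
  islin h /\ forall u v, h (t u v) = t' (f u) (g v).

Definition assoc_spec {k : fieldType} {X Y Z TXY TYZ TL TR : lmodType k}
  (t1 : X -> Y -> TXY) (t2 : TXY -> Z -> TL)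
  (t3 : Y -> Z -> TYZ) (t4 : X -> TYZ -> TR) (a : TL -> TR) : Prop :=
  islin a /\ forall x y z, a (t2 (t1 x y) z) = t4 x (t3 y z).

Definition lunit_spec {k : fieldType} {V T : lmodType k}
  (t : k^o -> V -> T) (l : T -> V) : Prop :=
  islin l /\ forall c v, l (t c v) = c *: v.
Definition runit_spec {k : fieldType} {V T : lmodType k}
  (t : V -> k^o -> T) (r : T -> V) : Prop :=
  islin r /\ forall v c, r (t v c) = c *: v.

Definition dual_functor (k : fieldType) : Prop :=
  (forall (E : ltvs k) (phi : cdual E), dmap (@id E) phi = phi) /\
  (forall (E F : ltvs k) (a : E -> F), is_morph a -> islin (dmap a)) /\
  (forall (E F G : ltvs k) (a : E -> F) (b : F -> G),
     is_morph a -> is_morph b ->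
     forall phi : cdual G, dmap (fun x => b (a x)) phi = dmap a (dmap b phi)).

Definition mu_exists (k : fieldType) : Prop :=
  forall (E F : ltvs k) (D : lmodType k) (d : cdual E -> cdual F -> D)
    (T : lmodType k) (t : E -> F -> T),
  is_tensor d -> is_tensor t ->
  exists Phi : D -> cdual (bang E F t), mu_spec E F d t Phi.

(** naturality of Phi: for morphisms a : E' -> E, b : F' -> F of Top_k,
    (a (x) b)° o Phi_{E,F} = Phi_{E',F'} o (a° (x) b°). *)
Definition mu_natural (k : fieldType) : Prop :=
  forall (E E' F F' : ltvs k) (a : E' -> E) (b : F' -> F),
  is_morph a -> is_morph b ->
  forall (D : lmodType k) (d : cdual E -> cdual F -> D)
    (D' : lmodType k) (d' : cdual E' -> cdual F' -> D')
    (T : lmodType k) (t : E -> F -> T)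
    (T' : lmodType k) (t' : E' -> F' -> T'),
  is_tensor d -> is_tensor d' -> is_tensor t -> is_tensor t' ->
  forall (Phi : D -> cdual (bang E F t)) (Phi' : D' -> cdual (bang E' F' t'))
    (m : D -> D') (ab : T' -> T),
  mu_spec E F d t Phi -> mu_spec E' F' d' t' Phi' ->
  tmap_spec d d' (dmap a) (dmap b) m -> tmap_spec t' t a b ab ->
  forall (x : D) (y : T'), cdfun (Phi' (m x)) y = cdfun (Phi x) (ab y).

(** associativity coherence:
    F(alpha) o Phi_{X(x)Y,Z} o (Phi_{X,Y} (x) 1)
      = Phi_{X,Y(x)Z} o (1 (x) Phi_{Y,Z}) o alpha_Vect,
    where F(alpha) is precomposition with the (inverse of the) associator
    alpha : (X(x)Y)(x)Z -> X(x)(Y(x)Z); stated with alpha on the argument. *)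
Definition mu_assoc (k : fieldType) : Prop :=
  forall (X Y Z : ltvs k)
    (T1 : lmodType k) (t1 : X -> Y -> T1)
    (T2 : lmodType k) (t2 : bang X Y t1 -> Z -> T2)
    (T3 : lmodType k) (t3 : Y -> Z -> T3)
    (T4 : lmodType k) (t4 : X -> bang Y Z t3 -> T4)
    (al : T2 -> T4)
    (D1 : lmodType k) (d1 : cdual X -> cdual Y -> D1)
    (D2 : lmodType k) (d2 : D1 -> cdual Z -> D2)
    (D3 : lmodType k) (d3 : cdual Y -> cdual Z -> D3)
    (D4 : lmodType k) (d4 : cdual X -> D3 -> D4)
    (al' : D2 -> D4)
    (D5 : lmodType k) (d5 : cdual (bang X Y t1) -> cdual Z -> D5)
    (D6 : lmodType k) (d6 : cdual X -> cdual (bang Y Z t3) -> D6)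
    (P1 : D1 -> cdual (bang X Y t1)) (P3 : D3 -> cdual (bang Y Z t3))
    (P5 : D5 -> cdual (bang (bang X Y t1) Z t2))
    (P6 : D6 -> cdual (bang X (bang Y Z t3) t4))
    (m1 : D2 -> D5) (m2 : D4 -> D6),
  is_tensor t1 -> is_tensor t2 -> is_tensor t3 -> is_tensor t4 ->
  is_tensor d1 -> is_tensor d2 -> is_tensor d3 -> is_tensor d4 ->
  is_tensor d5 -> is_tensor d6 ->
  assoc_spec t1 t2 t3 t4 al -> assoc_spec d1 d2 d3 d4 al' ->
  mu_spec X Y d1 t1 P1 -> mu_spec Y Z d3 t3 P3 ->
  mu_spec (bang X Y t1) Z d5 t2 P5 -> mu_spec X (bang Y Z t3) d6 t4 P6 ->
  tmap_spec d2 d5 P1 id m1 -> tmap_spec d4 d6 id P3 m2 ->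
  forall (x : D2) (y : T2), cdfun (P5 (m1 x)) y = cdfun (P6 (m2 (al' x))) (al y).

(** unit coherence (left and right), with the unit eps : k -> k°:
    F(lambda_X) o Phi_{k,X} o (eps (x) 1) = lambda_{X°}, where F(lambda_X)
    is precomposition with x |-> 1 (x) x; similarly on the right. *)
Definition mu_unit (k : fieldType) : Prop :=
  (forall (X : ltvs k)
     (Dk : lmodType k) (dk : k^o -> cdual X -> Dk)
     (D : lmodType k) (d : cdual (kdisc k) -> cdual X -> D)
     (T : lmodType k) (t : kdisc k -> X -> T)
     (Phi : D -> cdual (bang (kdisc k) X t)) (m : Dk -> D) (lam : Dk -> cdual X),
   is_tensor dk -> is_tensor d -> is_tensor t ->
   mu_spec (kdisc k) X d t Phi -> tmap_spec dk d eps id m -> lunit_spec dk lam ->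
   forall (z : Dk) (x : X), cdfun (Phi (m z)) (t 1 x) = cdfun (lam z) x) /\
  (forall (X : ltvs k)
     (Dk : lmodType k) (dk : cdual X -> k^o -> Dk)
     (D : lmodType k) (d : cdual X -> cdual (kdisc k) -> D)
     (T : lmodType k) (t : X -> kdisc k -> T)
     (Phi : D -> cdual (bang X (kdisc k) t)) (m : Dk -> D) (rho : Dk -> cdual X),
   is_tensor dk -> is_tensor d -> is_tensor t ->
   mu_spec X (kdisc k) d t Phi -> tmap_spec dk d id eps m -> runit_spec dk rho ->
   forall (z : Dk) (x : X), cdfun (Phi (m z)) (t x 1) = cdfun (rho z) x).

Definition dual_lax_monoidal (k : fieldType) : Prop :=
  [/\ dual_functor k, mu_exists k, mu_natural k, mu_assoc k & mu_unit k].

Definition dual_strong_on_cofinite (k : fieldType) : Prop :=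
  bijective (@eps k) /\
  forall (E F : ltvs k), cofinite E -> cofinite F ->
  forall (D : lmodType k) (d : cdual E -> cdual F -> D)
    (T : lmodType k) (t : E -> F -> T) (Phi : D -> cdual (bang E F t)),
  is_tensor d -> is_tensor t -> mu_spec E F d t Phi -> bijective Phi.

From HB Require Import structures.
From mathcomp Require Import all_boot all_algebra.
From mathcomp Require Import boolp classical_sets functions.
From mathcomp Require Import ring.
Import GRing.Theory.
Local Open Scope ring_scope.

(* All coherence laws for Phi are equalities between maps out of tensor
   products, so they reduce to evaluating both sides on pure tensors, where
   they become identities between products of scalars.  For the strong part,
   Phi is always injective: a relation sum_i phi_i(e) psi_i(f) = 0 lets one
   eliminate a term of sum_i phi_i (x) psi_i.  If E is cofinite, a functional
   lam on E (x)^! F vanishing on E0 (x) F, with E/E0 finite-dimensional, is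
   sum_i alpha_i (x) lam(v_i (x) -), where (v_i) spans E modulo E0 and the
   continuous alpha_i are the coordinates along (v_i). *)

Section DualMonoidal.
Variable k : fieldType.

Section LinearMaps.
Context {U V W : lmodType k}.

Definition linfun {f : U -> V} (lf : islin f) : {linear U -> V} :=
  HB.pack f (GRing.isLinear.Build k U V *:%R f lf).

Lemma lin0 {f : U -> V} : islin f -> f 0 = 0.
Proof. by move=> lf; exact: (raddf0 (linfun lf)). Qed.

Lemma linB {f : U -> V} : islin f -> forall x y, f (x - y) = f x - f y.
Proof. by move=> lf; exact: (raddfB (linfun lf)). Qed.

Lemma linZ {f : U -> V} : islin f -> forall a x, f (a *: x) = a *: f x.
Proof. by move=> lf; exact: (linearZZ (linfun lf)). Qed.

Lemma lin_sum {f : U -> V} (I : Type) (r : seq I) (F : I -> U) :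
  islin f -> f (\sum_(i <- r) F i) = \sum_(i <- r) f (F i).
Proof. by move=> lf; exact: (raddf_sum (linfun lf)). Qed.

Lemma lin_comp {f : U -> V} {g : V -> W} :
  islin f -> islin g -> islin (fun x => g (f x)).
Proof. by move=> lf lg a x y; rewrite lf lg. Qed.

Lemma subspaceD {S : U -> Prop} : subspace S ->
  forall x y, S x -> S y -> S (x + y).
Proof. by move=> [_ SD] x y Sx Sy; have := SD 1 x y Sx Sy; rewrite scale1r. Qed.

Lemma subspaceZ {S : U -> Prop} : subspace S -> forall a x, S x -> S (a *: x).
Proof. by move=> [S0 SD] a x Sx; have := SD a x 0 Sx S0; rewrite addr0. Qed.

Lemma subspaceB {S : U -> Prop} : subspace S ->
  forall x y, S x -> S y -> S (x - y).
Proof.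
by move=> sS x y Sx Sy; apply: subspaceD => //; rewrite -scaleN1r; apply: subspaceZ.
Qed.

Lemma subspace_preimage {f : U -> V} {S : V -> Prop} :
  islin f -> subspace S -> subspace (fun x => S (f x)).
Proof.
move=> lf [S0 SD]; split=> [|a x y Sx Sy]; first by rewrite lin0.
by rewrite lf; apply: SD.
Qed.

End LinearMaps.

Section Tensor.
Context {U V T : lmodType k} {t : U -> V -> T}.
Hypothesis tensor_t : is_tensor t.

Lemma tensor_ext {W : lmodType k} (g1 g2 : T -> W) : islin g1 -> islin g2 ->
  (forall u v, g1 (t u v) = g2 (t u v)) -> g1 =1 g2.
Proof.
case: tensor_t => -[tr tl] univ lg1 lg2 g12.
have b_bilin : bilin (fun u v => g2 (t u v)).
  by split=> [u|v]; [exact: lin_comp (tr u) lg2 | exact: lin_comp (tl v) lg2].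
have [f [_ [_ f_uniq]]] := univ W _ b_bilin.
by rewrite (f_uniq g1) // (f_uniq g2).
Qed.

Section SpanPred.
Variables (S : T -> Prop) (subspace_S : subspace S).

Definition span_pred : {pred T} := fun x => `[< S x >].
Record span_sub := SpanSub { span_val :> T; _ : span_val \in span_pred }.
HB.instance Definition _ := [isSub for span_val].
HB.instance Definition _ := [Choice of span_sub by <:].
Lemma span_submod_closed : submod_closed span_pred.
Proof.
case: subspace_S => S0 SD; split; first exact/asboolP.
by move=> a x y /asboolP Sx /asboolP Sy; apply/asboolP; apply: SD.
Qed.
HB.instance Definition _ :=
  GRing.isSubmodClosed.Build k T span_pred span_submod_closed.
HB.instance Definition _ := [SubChoice_isSubLmodule of span_sub by <:].

(* Corestrict [t] to the subspace [S] and factor it through [T]; the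
   composite with the inclusion is the identity by uniqueness. *)
Lemma tensor_ind : (forall u v, S (t u v)) -> forall x, S x.
Proof.
move=> S_t; have [[tr tl] univ] := tensor_t.
pose b u v : span_sub := SpanSub (t u v) (asboolT (S_t u v)).
have b_bilin : bilin b.
  by split=> [u|v] a x y; apply: val_inj; [exact: tr | exact: tl].
have [f [lf [fb _]]] := univ _ b b_bilin.
have val_f : (fun x => val (f x)) =1 id.
  by apply: tensor_ext => [a x y|//|u v]; rewrite ?lf ?fb.
by move=> x; have /asboolP := valP (f x); rewrite val_f.
Qed.

End SpanPred.

Lemma tensor_span x : exists s : seq (U * V), x = \sum_(p <- s) t p.1 p.2.
Proof.
apply: (tensor_ind (fun x => exists s : seq (U * V), x = \sum_(p <- s) t p.1 p.2)).
- split; first by exists [::]; rewrite big_nil.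
  move=> a _ _ [s1 ->] [s2 ->]; exists ([seq (a *: p.1, p.2) | p <- s1] ++ s2).
  rewrite big_cat big_map scaler_sumr; congr (_ + _).
  by apply: eq_bigr => p _; rewrite (linZ (tensor_t.1.2 _)).
- by move=> u v; exists [:: (u, v)]; rewrite big_seq1.
Qed.

End Tensor.

Lemma tensor_ext2 {U V D X Y T W : lmodType k} {d : U -> V -> D}
    {t : X -> Y -> T} (B1 B2 : D -> T -> W) :
  is_tensor d -> is_tensor t -> bilin B1 -> bilin B2 ->
  (forall u v x y, B1 (d u v) (t x y) = B2 (d u v) (t x y)) ->
  forall z w, B1 z w = B2 z w.
Proof.
move=> tensor_d tensor_t [B1r B1l] [B2r B2l] B12.
have B12_d u v : B1 (d u v) =1 B2 (d u v).
  exact (tensor_ext tensor_t _ _ (B1r _) (B2r _) (B12 u v)).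
by move=> z w; apply: (tensor_ext tensor_d _ _ (B1l w) (B2l w)) => u v; apply: B12_d.
Qed.

Section ContinuousDual.
Context {E : ltvs k}.

Lemma cdual_lin (phi : cdual E) : islin phi.
Proof. by have /asboolP[] := valP phi. Qed.

Lemma cdual_open_ker (phi : cdual E) : lt_open E (fun x => phi x = 0).
Proof. by have /asboolP[] := valP phi. Qed.

Lemma cdualP (phi psi : cdual E) : phi =1 psi -> phi = psi.
Proof. by move=> phi_psi; apply: val_inj; apply: funext. Qed.

Lemma eval_lin (x : E) : islin (fun phi : cdual E => phi x).
Proof. by []. Qed.

Lemma cdual_of (g : E -> k^o) : islin g -> lt_open E (fun x => g x = 0) ->
  exists phi : cdual E, cdfun phi = g.
Proof. by move=> lg og; exists (CDual _ _ g (asboolT (conj lg og))). Qed.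

Lemma cdual_eval_lin {D : lmodType k} {P : D -> cdual E} (x : E) :
  islin P -> islin (fun z => P z x).
Proof. by move=> lP; apply: lin_comp lP (eval_lin x). Qed.

Lemma cdual_sum (I : Type) (r : seq I) (F : I -> cdual E) x :
  (\sum_(i <- r) F i) x = \sum_(i <- r) F i x.
Proof. exact: lin_sum _ _ _ (eval_lin x). Qed.

End ContinuousDual.

Lemma dmapE (E' E : ltvs k) (a : E' -> E) (phi : cdual E) : is_morph a ->
  cdfun (dmap a phi) = fun x => phi (a x).
Proof.
move=> [la ca]; rewrite /dmap insubdK //; apply/asboolP; split.
  exact: lin_comp la (cdual_lin phi).
exact: ca _ (cdual_open_ker phi).
Qed.

Lemma dual_functorP : dual_functor k.
Proof.
split; [|split].
- move=> E phi; apply: cdualP => x; rewrite /dmap insubdK //; exact: valP.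
- by move=> E F a ma c u v; apply: cdualP => x; rewrite /= !dmapE.
- move=> E F G a b [la ca] [lb cb] phi; apply: cdualP => x.
  rewrite !dmapE //; split; first exact: lin_comp.
  by move=> W oW; apply: ca (cb _ oW).
Qed.

Lemma cdual_tensor_ext {E F : ltvs k} {T : lmodType k} {t : E -> F -> T}
    (lam mu : cdual (bang E F t)) :
  is_tensor t -> (forall e f, lam (t e f) = mu (t e f)) -> lam = mu.
Proof.
move=> tensor_t lam_mu; apply: cdualP.
exact (tensor_ext tensor_t _ _ (cdual_lin lam) (cdual_lin mu) lam_mu).
Qed.

Lemma mul_bilin {E F : ltvs k} (phi : cdual E) (psi : cdual F) :
  bilin (fun (e : E) (f : F) => (phi e * psi f : k^o)).
Proof.
split=> [e|f] a x y /=.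
- by rewrite (cdual_lin psi) mulrDr /GRing.scale /= mulrCA.
- by rewrite (cdual_lin phi) mulrDl /GRing.scale /= mulrA.
Qed.

(* Continuity: the kernel contains [ker phi (x) F + E (x) ker psi]. *)
Lemma cdual_tensor_exists {E F : ltvs k} {T : lmodType k} {t : E -> F -> T}
    (phi : cdual E) (psi : cdual F) : is_tensor t ->
  exists lam : cdual (bang E F t), forall e f, lam (t e f) = phi e * psi f.
Proof.
move=> [_ univ]; have [g [lg [gt _]]] := univ _ _ (mul_bilin phi psi).
have [lam lamE] : exists lam : cdual (bang E F t), cdfun lam = g.
  apply: (@cdual_of (bang E F t) g lg); split; first exact: subspace_ker.
  exists (fun e => phi e = 0), (fun f => psi f = 0); split.
  - exact: cdual_open_ker.
  - exact: cdual_open_ker.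
  - by move=> e f phi_e; rewrite gt /= phi_e mul0r.
  - by move=> e f psi_f; rewrite gt /= psi_f mulr0.
by exists lam => e f; rewrite lamE gt.
Qed.

Lemma mu_existsP : mu_exists k.
Proof.
move=> E F D d T t tensor_d tensor_t.
have [Bp BpE] := choice (fun p : cdual E * cdual F =>
  cdual_tensor_exists p.1 p.2 tensor_t).
pose B phi psi := Bp (phi, psi).
have BE phi psi e f : B phi psi (t e f) = phi e * psi f by exact: (BpE (phi, psi)).
have B_bilin : bilin B.
  split=> [phi|psi] a x y; apply: (cdual_tensor_ext _ _ tensor_t) => e f.
  - rewrite -[RHS]/(a * B phi x (t e f) + B phi y (t e f)) !BE.
    by rewrite (eval_lin f) mulrDr mulrCA.
  - rewrite -[RHS]/(a * B x psi (t e f) + B y psi (t e f)) !BE.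
    by rewrite (eval_lin e) mulrDl mulrA.
have [Phi [lPhi [PhiE _]]] := tensor_d.2 _ B B_bilin.
by exists Phi; split=> // phi psi e f; rewrite PhiE BE.
Qed.

Lemma mu_naturalP : mu_natural k.
Proof.
move=> E E' F F' a b ma mb D d D' d' T t T' t' tensor_d _ _ tensor_t'
  Phi Phi' m ab [lPhi PhiE] [lPhi' PhiE'] [lm mE] [lab abE].
apply: (tensor_ext2 (fun x y => Phi' (m x) y) (fun x y => Phi x (ab y))
  tensor_d tensor_t').
- by split=> [x|y]; [exact: cdual_lin | exact: cdual_eval_lin (lin_comp lm lPhi')].
- by split=> [x|y]; [exact: lin_comp lab (cdual_lin (Phi x)) | exact: cdual_eval_lin].
- by move=> phi psi e f; rewrite mE PhiE' abE PhiE !dmapE.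
Qed.

Lemma mu_assocP : mu_assoc k.
Proof.
move=> X Y Z T1 t1 T2 t2 T3 t3 T4 t4 al D1 d1 D2 d2 D3 d3 D4 d4 al' D5 d5
  D6 d6 P1 P3 P5 P6 m1 m2 tensor_t1 tensor_t2 _ _ tensor_d1 tensor_d2 _ _ _ _
  [lal alE] [lal' alE'] [lP1 P1E] [lP3 P3E] [lP5 P5E] [lP6 P6E] [lm1 m1E] [lm2 m2E].
have [[_ t2l] [_ d2l]] := (tensor_t2.1, tensor_d2.1).
apply: (tensor_ext2 (fun x y => P5 (m1 x) y) (fun x y => P6 (m2 (al' x)) (al y))
  tensor_d2 tensor_t2).
- by split=> [x|y]; [exact: cdual_lin | exact: cdual_eval_lin (lin_comp lm1 lP5)].
- split=> [x|y]; first exact: lin_comp lal (cdual_lin (P6 (m2 (al' x)))).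
  exact: cdual_eval_lin (lin_comp lal' (lin_comp lm2 lP6)).
move=> u chi s z.
apply: (tensor_ext2 (fun u s => P5 (m1 (d2 u chi)) (t2 s z))
  (fun u s => P6 (m2 (al' (d2 u chi))) (al (t2 s z))) tensor_d1 tensor_t1).
- split=> [u'|s']; first exact: lin_comp (t2l z) (cdual_lin (P5 (m1 (d2 u' chi)))).
  exact: cdual_eval_lin (lin_comp (d2l chi) (lin_comp lm1 lP5)).
- split=> [u'|s'].
    exact: lin_comp (t2l z) (lin_comp lal (cdual_lin (P6 (m2 (al' (d2 u' chi)))))).
  exact: cdual_eval_lin (lin_comp (d2l chi) (lin_comp lal' (lin_comp lm2 lP6))).
- by move=> phi psi x y; rewrite m1E P5E P1E alE' m2E alE P6E P3E mulrA.
Qed.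

Lemma epsE (c : k^o) : cdfun (@eps k c) = fun x => c * x.
Proof.
have l : islin (fun x : k^o => c * x : k^o).
  by move=> a x y; rewrite mulrDr /GRing.scale /= mulrCA.
rewrite /eps insubdK //; apply/asboolP; split=> //.
exact: subspace_ker.
Qed.

Lemma mu_unitP : mu_unit k.
Proof.
split.
- move=> X Dk dk D d T t Phi m lam tensor_dk _ _ [lPhi PhiE] [lm mE] [llam lamE] z x.
  apply: (tensor_ext tensor_dk (fun z => Phi (m z) (t 1 x)) (fun z => lam z x)).
  + exact: cdual_eval_lin (lin_comp lm lPhi).
  + exact: cdual_eval_lin.
  + by move=> c psi; rewrite mE PhiE lamE epsE mulr1.
- move=> X Dk dk D d T t Phi m rho tensor_dk _ _ [lPhi PhiE] [lm mE] [lrho rhoE] z x.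
  apply: (tensor_ext tensor_dk (fun z => Phi (m z) (t x 1)) (fun z => rho z x)).
  + exact: cdual_eval_lin (lin_comp lm lPhi).
  + exact: cdual_eval_lin.
  + by move=> psi c; rewrite mE PhiE rhoE epsE mulr1 mulrC.
Qed.

Lemma eps_bij : bijective (@eps k).
Proof.
exists (fun phi : cdual (kdisc k) => phi 1); first by move=> c; rewrite epsE mulr1.
move=> phi; apply: cdualP => x; rewrite epsE.
by have := linZ (cdual_lin phi) x 1; rewrite /GRing.scale /= mulr1 mulrC => <-.
Qed.

Lemma tensor_relation_eq0 {E F : ltvs k} {D : lmodType k}
    {d : cdual E -> cdual F -> D} (s : seq (cdual E * cdual F)) : bilin d ->
  (forall e f, \sum_(p <- s) p.1 e * p.2 f = 0) -> \sum_(p <- s) d p.1 p.2 = 0.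
Proof.
move=> [dr dl]; have [n] := ubnP (size s).
elim: n s => // n IH [|[phi psi] s] size_s rel; first by rewrite big_nil.
have rel_s e f : \sum_(p <- s) p.1 e * p.2 f = - (phi e * psi f).
  by apply/eqP; rewrite -addr_eq0 addrC; have := rel e f; rewrite big_cons => ->.
rewrite big_cons /=.
have [[f0 psi_f0] | psi_zero] := pselect (exists f0, psi f0 != 0); last first.
  have psi0 f : psi f = 0.
    by apply: contrapT => /eqP psi_f; apply: psi_zero; exists f.
  have -> : psi = 0 by apply: cdualP.
  rewrite (lin0 (dr phi)) add0r; apply: IH => // e f.
  by rewrite rel_s psi0 mulr0 oppr0.
(* Evaluating the relation at [f0] expresses [phi] through the other [p.1]. *)
pose c : k := (psi f0)^-1.
have phiE : phi = - c *: \sum_(p <- s) (p.2 f0 : k) *: p.1.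
  apply: cdualP => e; rewrite (linZ (eval_lin e)) cdual_sum.
  rewrite -[RHS]/(- c * \sum_(p <- s) p.2 f0 * p.1 e).
  under eq_bigr => p _ do rewrite mulrC.
  by rewrite rel_s mulrNN mulrCA mulVf // mulr1.
(* Substituting it, the first term is absorbed into the others by replacing
   each [p.2] with [p.2 - c p.2(f0) psi]; the new list is shorter. *)
pose s' := [seq (p.1, p.2 - (c * p.2 f0 : k) *: psi) : cdual E * cdual F
  | p : cdual E * cdual F <- s].
have s'E : \sum_(p <- s') d p.1 p.2 =
    \sum_(p <- s) d p.1 p.2 - \sum_(p <- s) (c * p.2 f0) *: d p.1 psi.
  rewrite big_map -sumrB; apply: eq_bigr => p _.
  by rewrite (linB (dr _)) (linZ (dr _)).
have -> : d phi psi = - \sum_(p <- s) (c * p.2 f0) *: d p.1 psi.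
  rewrite phiE (linZ (dl psi)) (lin_sum _ _ _ (dl psi)) scaleNr scaler_sumr.
  by congr (- _); apply: eq_bigr => p _; rewrite (linZ (dl psi)) scalerA.
rewrite addrC -s'E; apply: IH; first by rewrite size_map.
move=> e f; rewrite big_map.
have expand (p : cdual E * cdual F) :
    p.1 e * (p.2 - (c * p.2 f0 : k) *: psi) f =
    p.1 e * p.2 f - c * psi f * (p.1 e * p.2 f0).
  rewrite (linB (eval_lin f)) (linZ (eval_lin f)) /GRing.scale /=.
  ring.
rewrite (eq_bigr _ (fun p _ => expand p)) sumrB -mulr_sumr !rel_s /c.
by field.
Qed.

Lemma Phi_injective {E F : ltvs k} {D T : lmodType k} {d : cdual E -> cdual F -> D}
    {t : E -> F -> T} {Phi : D -> cdual (bang E F t)} :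
  is_tensor d -> mu_spec E F d t Phi -> injective Phi.
Proof.
move=> tensor_d [lPhi PhiE] x y Phixy; apply/eqP; rewrite -subr_eq0; apply/eqP.
have [s xyE] := tensor_span tensor_d (x - y).
rewrite xyE; apply: (tensor_relation_eq0 s tensor_d.1) => e f.
transitivity (Phi (x - y) (t e f)); last by rewrite (linB lPhi) Phixy subrr.
by rewrite xyE (lin_sum _ _ _ lPhi) cdual_sum; apply: eq_bigr => p _; rewrite PhiE.
Qed.

Section CofiniteExpansion.
Context {E : ltvs k}.

Definition dual_expand (L : seq (cdual E * E)) (e : E) : E :=
  \sum_(p <- L) p.1 e *: p.2.

Lemma dual_expand_lin L : islin (dual_expand L).
Proof.
move=> a x y; rewrite /dual_expand scaler_sumr -big_split; apply: eq_bigr => p _.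
by rewrite (cdual_lin p.1) scalerDl -scalerA.
Qed.

Lemma dual_expand_open_ker L : lt_open E (fun x => dual_expand L x = 0).
Proof.
have sker := subspace_ker _ (dual_expand_lin L).
elim: L sker => [|p L IH] sker.
  by apply: lt_open_up (lt_open_full _ _) sker _ => x _; rewrite /dual_expand big_nil.
apply: lt_open_up (lt_open_cap _ _ _ _ (cdual_open_ker p.1) (IH _)) sker _.
  exact: subspace_ker _ (dual_expand_lin L).
by move=> x [p1x Lx]; rewrite /dual_expand big_cons p1x scale0r add0r.
Qed.

(* The coefficient along [v] modulo [E0] is unique since [v \notin E0]; this
   makes the chosen coefficient linear, and it vanishes wherever [g] lands in
   [E0]. *)
Lemma coord_along (E0 : E -> Prop) (v : E) (g : E -> E) :
  lt_open E E0 -> ~ E0 v -> islin g -> lt_open E (fun x => E0 (g x)) ->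
  (forall e, exists a : k, E0 (g e - a *: v)) ->
  exists alpha : cdual E, forall e, E0 (g e - alpha e *: v).
Proof.
move=> oE0 E0v lg og g_line.
have sE0 := lt_open_subspace _ _ _ oE0.
have coord_uniq x a b : E0 (x - a *: v) -> E0 (x - b *: v) -> a = b.
  move=> xa xb; have := subspaceB sE0 _ _ xb xa.
  rewrite opprB addrC addrA subrK -scalerBl => abv.
  apply/eqP; rewrite -subr_eq0; apply/negPn/negP => ab_neq0; apply: E0v.
  by have := subspaceZ sE0 (a - b)^-1 _ abv; rewrite scalerA mulVf ?scale1r.
have [A AE] := choice g_line.
have lA : islin (A : E -> k^o).
  move=> a x y; apply: (coord_uniq (g (a *: x + y))); first exact: AE.
  have -> : g (a *: x + y) - (a * A x + A y) *: v =
      a *: (g x - A x *: v) + (g y - A y *: v).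
    by rewrite lg scalerDl scalerBr scalerA opprD addrACA.
  exact: sE0.2 a _ _ (AE x) (AE y).
have oA : lt_open E (fun x => A x = 0).
  apply: lt_open_up og (subspace_ker _ lA) _ => x E0gx.
  by apply: esym; apply: (coord_uniq (g x)); rewrite ?scale0r ?subr0.
have [alpha alphaE] := cdual_of _ lA oA.
by exists alpha => e; rewrite alphaE.
Qed.

Lemma cofinite_expansion (s : seq E) (E0 : E -> Prop) : lt_open E E0 ->
  (forall e, exists c : 'I_(size s) -> k, E0 (e - \sum_(i < size s) c i *: s`_i)) ->
  exists L : seq (cdual E * E), forall e, E0 (e - dual_expand L e).
Proof.
elim: s E0 => [|v s IH] E0 oE0 span_s.
  by exists [::] => e; have [c] := span_s e; rewrite big_ord0 /dual_expand big_nil.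
have sE0 := lt_open_subspace _ _ _ oE0.
pose E1 x := exists a : k, E0 (x - a *: v).
have oE1 : lt_open E E1.
  apply: lt_open_up oE0 _ _ => [|x E0x]; last by exists 0; rewrite scale0r subr0.
  split=> [|a x y [a1 xa1] [a2 ya2]]; first by exists 0; rewrite scale0r subr0; case: sE0.
  exists (a * a1 + a2); rewrite scalerDl -scalerA opprD addrACA -scalerBr.
  exact: sE0.2 a _ _ xa1 ya2.
have [L1 L1E] : exists L1, forall e, E1 (e - dual_expand L1 e).
  apply: IH oE1 _ => e; have [c ce] := span_s e.
  exists (fun i => c (lift ord0 i)), (c ord0).
  by move: ce; rewrite big_ord_recl opprD addrA addrAC.
have [E0v | E0v] := pselect (E0 v).
  exists L1 => e; have [a ea] := L1E e.
  rewrite -(subrK (a *: v) (e - _)).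
  exact: subspaceD sE0 _ _ ea (subspaceZ sE0 a v E0v).
pose g e := e - dual_expand L1 e.
have lg : islin g.
  by move=> a x y; rewrite /g (dual_expand_lin L1) scalerBr opprD addrACA.
have og : lt_open E (fun x => E0 (g x)).
  apply: lt_open_up (lt_open_cap _ _ _ _ oE0 (dual_expand_open_ker L1)) _ _.
    exact: subspace_preimage lg sE0.
  by move=> x [E0x L1x]; rewrite /g L1x subr0.
have [alpha alphaE] := coord_along E0 v g oE0 E0v lg og L1E.
exists ((alpha, v) :: L1) => e.
by rewrite /dual_expand big_cons /= opprD addrA addrAC; exact: alphaE.
Qed.

End CofiniteExpansion.

Lemma Phi_surjective {E F : ltvs k} {D T : lmodType k} {d : cdual E -> cdual F -> D}
    {t : E -> F -> T} {Phi : D -> cdual (bang E F t)} :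
  cofinite E -> is_tensor t -> mu_spec E F d t Phi ->
  forall lam, exists x, Phi x = lam.
Proof.
move=> cofE tensor_t [lPhi PhiE] lam; have [tr tl] := tensor_t.1.
have [_ [E0 [F0 [oE0 oF0 lamE0 lamF0]]]] := cdual_open_ker lam.
have [s span_s] := cofE E0 oE0.
have [L LE] := cofinite_expansion s E0 oE0 span_s.
have lam_v (v : E) : exists psi : cdual F, forall f, psi f = lam (t v f).
  have lv : islin (fun f => lam (t v f) : k^o) := lin_comp (tr v) (cdual_lin lam).
  have [psi psiE] := cdual_of _ lv
    (lt_open_up _ _ _ _ oF0 (subspace_ker _ lv) (lamF0 v)).
  by exists psi => f; rewrite psiE.
have [Psi PsiE] := choice lam_v.
exists (\sum_(p <- L) d p.1 (Psi p.2)).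
apply: (cdual_tensor_ext _ _ tensor_t) => e f.
rewrite (lin_sum _ _ _ lPhi) cdual_sum.
under eq_bigr => p _ do rewrite PhiE PsiE.
have := lamE0 _ f (LE e).
rewrite (linB (tl f)) (linB (cdual_lin lam)) => /eqP; rewrite subr_eq0 => /eqP ->.
rewrite /dual_expand (lin_sum _ _ _ (tl f)) (lin_sum _ _ _ (cdual_lin lam)).
by apply: eq_bigr => p _; rewrite (linZ (tl f)) (linZ (cdual_lin lam)).
Qed.

Lemma dual_strong_on_cofiniteP : dual_strong_on_cofinite k.
Proof.
split; first exact: eps_bij.
move=> E F cofE _ D d T t Phi tensor_d tensor_t muPhi.
rewrite -setTT_bijective; split=> [x _ // | x y _ _ | lam _].
  exact: (Phi_injective tensor_d muPhi x y).
by have [x <-] := Phi_surjective cofE tensor_t muPhi lam; exists x.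
Qed.

End DualMonoidal.

Theorem theorem2p1 (k : fieldType) :
  dual_lax_monoidal k /\ dual_strong_on_cofinite k.
Proof.
split; last exact: dual_strong_on_cofiniteP.
by split; [exact: dual_functorP | exact: mu_existsP | exact: mu_naturalP
          | exact: mu_assocP | exact: mu_unitP].
Qed.
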